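(* Let $p\in[0,1)$, $\alpha\in[0,1]$, $0\le h_1<\dots<h_N\le1$, and nonnegative weights $f_0^S(h_j),f_0^{NS}(h_j)$, $j=1,\dots,N$, each summing to $1$; set $f_0(h_j)=\alpha f_0^S(h_j)+(1-\alpha)f_0^{NS}(h_j)$ with $f_0(h_N)>0$, and $f_0([h_i,1])=\sum_{j\ge i}f_0(h_j)$. Let $A=(A_{ij})_{i,j=1}^N$ be the matrix $$A_{ij}=\begin{cases}(1-\alpha)f_0^{NS}(h_i)-\big(p+(1-p)f_0([h_i,1])\big),& i=j,\\ (1-\alpha)\big[p+(1-p)1_{\{j\ge i\}}\big]f_0^{NS}(h_j),& i\ne j.\end{cases}$$ Then every eigenvalue $z\in\mathbb{C}$ of $A$ satisfies $\mathrm{Re}\,z\le-p\alpha-(1-p)\alpha f_0^S(h_N)$.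
   Context: $A$ is the matrix of the linear ODE system satisfied by the mean opinions of non-stubborn individuals at each hierarchy level; $\alpha$ is the fraction of stubborn individuals, $f_0^S(h_j)$ and $f_0^{NS}(h_j)$ the proportions of level $h_j$ within the stubborn and non-stubborn populations. *)

From HB Require Import structures.
From mathcomp Require Import all_boot all_order all_algebra.
From mathcomp Require Import complex.
Set Implicit Arguments. Unset Strict Implicit. Unset Printing Implicit Defensive.
Import Order.TTheory GRing.Theory Num.Theory.
Local Open Scope ring_scope.

(* Levels h_1 < ... < h_N are indexed by 'I_n.+1 (N = n+1 >= 1, needed for f_0(h_N) > 0). *)

Definition f0 (R : rcfType) (n : nat) (alpha : R) (fS fNS : 'I_n.+1 -> R) (j : 'I_n.+1) : R :=
  alpha * fS j + (1 - alpha) * fNS j.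

Definition f0tail (R : rcfType) (n : nat) (alpha : R) (fS fNS : 'I_n.+1 -> R) (i : 'I_n.+1) : R :=
  \sum_(j < n.+1 | (i <= j)%N) f0 alpha fS fNS j.

Definition Amat (R : rcfType) (n : nat) (p alpha : R) (fS fNS : 'I_n.+1 -> R) : 'M[R]_n.+1 :=
  \matrix_(i, j)
    if i == j then (1 - alpha) * fNS i - (p + (1 - p) * f0tail alpha fS fNS i)
    else (1 - alpha) * (p + (1 - p) * (if (i <= j)%N then 1 else 0)) * fNS j.

From HB Require Import structures.
From mathcomp Require Import all_boot all_order all_algebra.
From mathcomp Require Import complex.
From mathcomp Require Import ring.
Import Order.TTheory GRing.Theory Num.Theory.
Local Open Scope ring_scope.

(* A has nonnegative off-diagonal entries, and its i-th row sums to
   -p alpha - (1-p) alpha f_0^S([h_i,1]), because the non-stubborn mass in the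
   off-diagonal entries cancels against f_0([h_i,1]) on the diagonal. By
   Gershgorin's theorem some row j gives |z - A_jj| <= sum_{i<>j} A_ji, hence
   Re z <= A_jj + sum_{i<>j} A_ji, which is at most the bound since
   f_0^S([h_j,1]) >= f_0^S(h_N). *)

Lemma eigenvalue_trmx (F : fieldType) n (A : 'M[F]_n) a :
  eigenvalue A^T a = eigenvalue A a.
Proof.
rewrite /eigenvalue /eigenspace !kermx_eq0 !row_free_unit.
by rewrite -unitmx_tr linearB /= tr_scalar_mx trmxK.
Qed.

Lemma gershgorin_col (F : numFieldType) n (A : 'M[F]_n.+1) z : eigenvalue A z ->
  exists j, `|z - A j j| <= \sum_(i | i != j) `|A i j|.
Proof.
case/eigenvalueP=> v /rowP vA v_neq0.
have [j _ vj_max] := @real_arg_maxP _ _ ord0 xpredT (fun i => `|v 0 i|)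
  isT (fun i _ => normr_real (v 0 i)).
exists j.
have vj_gt0 : 0 < `|v 0 j|.
  rewrite lt_def normr_ge0 andbT; apply: contraNneq v_neq0 => vj0.
  apply/eqP/rowP=> i; rewrite mxE; apply/eqP; rewrite -normr_le0 -vj0.
  exact: vj_max.
have eq_j : (z - A j j) * v 0 j = \sum_(i | i != j) v 0 i * A i j.
  move: (vA j); rewrite !mxE (bigD1 j) //= => eq_zv.
  by rewrite mulrBl -eq_zv [A j j * _]mulrC addrAC subrr add0r.
rewrite -(ler_pM2r vj_gt0) -normrM eq_j mulr_suml.
apply: le_trans (ler_norm_sum _ _ _) _; apply: ler_sum => i _.
by rewrite normrM mulrC ler_wpM2l ?normr_ge0 //; apply: vj_max.
Qed.

Lemma gershgorin_row (F : numFieldType) n (A : 'M[F]_n.+1) z : eigenvalue A z ->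
  exists j, `|z - A j j| <= \sum_(i | i != j) `|A j i|.
Proof.
rewrite -eigenvalue_trmx => /gershgorin_col[j le_j].
by exists j; move: le_j; rewrite mxE; under eq_bigr do rewrite mxE.
Qed.

Lemma Re_le_of_norm_le (R : rcfType) (w : R[i]) (r : R) :
  `|w| <= r%:C%C -> complex.Re w <= r.
Proof.
rewrite normc_def lecR; apply: le_trans; apply: le_trans (ler_norm _) _.
by rewrite -sqrtr_sqr ler_wsqrtr // lerDl sqr_ge0.
Qed.

Lemma metzler_eigenvalue_Re_le (R : rcfType) n (A : 'M[R]_n.+1) (b : R) z :
  (forall i j, i != j -> 0 <= A i j) -> (forall i, \sum_j A i j <= b) ->
  eigenvalue (map_mx (fun x : R => x%:C%C) A) z -> complex.Re z <= b.
Proof.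
move=> A_offdiag_ge0 row_sum_le /gershgorin_row[j]; rewrite mxE.
under eq_bigr => i ij do rewrite mxE ger0_norm ?ler0c ?A_offdiag_ge0 1?eq_sym //.
rewrite -rmorph_sum => /Re_le_of_norm_le.
move: (row_sum_le j); rewrite (bigD1 j) //= => le_b.
by case: z => x y /=; rewrite lerBlDl => /le_trans; apply.
Qed.

Section Amat.
Variables (R : rcfType) (n : nat) (p alpha : R) (fS fNS : 'I_n.+1 -> R).
Hypotheses (p_ge0 : 0 <= p) (p_le1 : p <= 1) (alpha_ge0 : 0 <= alpha) (alpha_le1 : alpha <= 1).
Hypotheses (fS_ge0 : forall j, 0 <= fS j) (fNS_ge0 : forall j, 0 <= fNS j).
Hypothesis fNS_sum1 : \sum_j fNS j = 1.
Local Notation A := (Amat p alpha fS fNS).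

Lemma Amat_offdiag_ge0 i j : i != j -> 0 <= A i j.
Proof.
move=> /negbTE neq_ij; rewrite mxE neq_ij.
apply/mulr_ge0/fNS_ge0/mulr_ge0; first by rewrite subr_ge0.
by rewrite addr_ge0 ?mulr_ge0 ?subr_ge0 //; case: ifP.
Qed.

Lemma AmatE i j : A i j =
  (1 - alpha) * p * fNS j + (if (i <= j)%N then (1 - alpha) * (1 - p) * fNS j else 0)
  - (if j == i then p + (1 - p) * f0tail alpha fS fNS i else 0).
Proof.
rewrite mxE eq_sym; case: eqVneq => [<-|_]; first by rewrite leqnn; ring.
by case: (i <= j)%N; ring.
Qed.

Lemma Amat_row_sum i :
  \sum_j A i j = - (p * alpha) - (1 - p) * alpha * \sum_(j < n.+1 | (i <= j)%N) fS j.
Proof.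
under eq_bigr do rewrite AmatE.
rewrite sumrB big_split /= -!big_mkcond big_pred1_eq -!mulr_sumr fNS_sum1.
rewrite /f0tail /f0 big_split /= -!mulr_sumr.
ring.
Qed.

Lemma Amat_row_sum_le i :
  \sum_j A i j <= - (p * alpha) - (1 - p) * alpha * fS ord_max.
Proof.
rewrite Amat_row_sum lerD2l lerN2 ler_wpM2l ?mulr_ge0 ?subr_ge0 //.
by rewrite (bigD1 ord_max) ?leq_ord //= lerDl sumr_ge0.
Qed.

End Amat.

Theorem proposition4p5 (R : rcfType) (n : nat) (p alpha : R)
  (h : 'I_n.+1 -> R) (fS fNS : 'I_n.+1 -> R) :
  0 <= p -> p < 1 ->
  0 <= alpha -> alpha <= 1 ->
  (forall i, 0 <= h i) -> (forall i, h i <= 1) ->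
  (forall i j : 'I_n.+1, (i < j)%N -> h i < h j) ->
  (forall j, 0 <= fS j) -> (forall j, 0 <= fNS j) ->
  \sum_(j < n.+1) fS j = 1 -> \sum_(j < n.+1) fNS j = 1 ->
  0 < f0 alpha fS fNS ord_max ->
  forall z : R[i],
    eigenvalue (map_mx (fun x : R => x%:C%C) (Amat p alpha fS fNS)) z ->
    complex.Re z <= - (p * alpha) - (1 - p) * alpha * fS ord_max.
Proof.
move=> p_ge0 /ltW p_le1 alpha_ge0 alpha_le1 _ _ _ fS_ge0 fNS_ge0 _ fNS_sum1 _ z.
apply: metzler_eigenvalue_Re_le.
- exact: Amat_offdiag_ge0.
- exact: Amat_row_sum_le.
Qed.
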